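(* Let $(G,d)$ be a boundedly compact $p$-uniformly convex metric space with $p>1$ and $c>0$, $f:G\to\mathbb{R}$ proper, convex and lower semicontinuous, $\lambda>0$. Then: (i) $\operatorname{argmin}f\subset\mathrm{Fix}\,\mathrm{prox}^p_{f,\lambda}$; (ii) for all $x,y\in G$, with $x_+=\mathrm{prox}^p_{f,\lambda}(x)$, $y_+=\mathrm{prox}^p_{f,\lambda}(y)$: $\Delta^{(p,c)}(x,y,x_+,y_+)\ge\frac{c^2}{4}d(x_+,y_+)^p$; (iii) if $c\in(3/2,2]$, then for all $x,y\in G$, $$d(x_+,y_+)^p\le(1+\epsilon_c)d(x,y)^p-\frac{1-\alpha_c}{\alpha_c}\psi^{(p,c)}(x,y,x_+,y_+),\quad\alpha_c=\frac{c(c-1)}{2+c(c-1)},\ \epsilon_c=\frac{2-c}{c-1},$$ i.e. $\mathrm{prox}^p_{f,\lambda}$ is a$\alpha$-fne on $G$ with constant $\alpha_c$ and violation $\epsilon_c$.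
   Context: $(G,d)$ uniquely geodesic; $(1-\tau)x\oplus\tau y$ is the point on the geodesic from $x$ to $y$ at distance $\tau d(x,y)$ from $x$. $p$-uniform convexity with constant $c$: $d(z,(1-\tau)x\oplus\tau y)^p\le(1-\tau)d(z,x)^p+\tau d(z,y)^p-\frac c2\tau(1-\tau)d(x,y)^p$. $f$ convex: $f((1-\tau)x\oplus\tau y)\le(1-\tau)f(x)+\tau f(y)$. $\mathrm{prox}^p_{f,\lambda}(x)=\operatorname{argmin}_{y\in G}\{f(y)+\frac1{p\lambda^{p-1}}d(y,x)^p\}$ (single-valued here). $\Delta^{(p,c)}(x,y,u,v)=\frac c4\big(d(x,v)^p+d(y,u)^p-d(x,u)^p-d(y,v)^p\big)$; $\psi^{(p,c)}(x,y,u,v)=\frac c2\big(d(x,u)^p+d(y,v)^p+d(u,v)^p+d(x,y)^p-d(y,u)^p-d(x,v)^p\big)$. A mapping $T$ is a$\alpha$-fne on $G$ with constant $\alpha\in(0,1)$ and violation $\epsilon\ge0$ if $d(Tx,Ty)^p\le(1+\epsilon)d(x,y)^p-\frac{1-\alpha}{\alpha}\psi^{(p,c)}(x,y,Tx,Ty)$ for all $x,y\in G$. *)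

From HB Require Import structures.
From mathcomp Require Import all_boot all_order all_algebra.
From mathcomp Require Import all_classical all_reals all_analysis.
Set Implicit Arguments. Unset Strict Implicit. Unset Printing Implicit Defensive.
Import Order.TTheory GRing.Theory Num.Theory numFieldNormedType.Exports.
Local Open Scope classical_set_scope.
Local Open Scope ring_scope.

Section Defs.
Variables (R : realType) (G : choiceType).

Definition is_metric (d : G -> G -> R) : Prop :=
  [/\ forall x y, 0 <= d x y,
      forall x y, d x y = 0 <-> x = y,
      forall x y, d x y = d y x &
      forall x y z, d x z <= d x y + d y z].

Definition is_geodesic (d : G -> G -> R) (x y : G) (gamma : R -> G) : Prop :=
  [/\ gamma 0 = x, gamma 1 = y &
      forall s t, 0 <= s <= 1 -> 0 <= t <= 1 ->
        d (gamma s) (gamma t) = `|s - t| * d x y].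

(* (G,d) is uniquely geodesic, and geo x y tau = (1-tau) x (+) tau y is the
   point on the unique geodesic from x to y at distance tau d(x,y) from x. *)
Definition uniquely_geodesic (d : G -> G -> R) (geo : G -> G -> R -> G) : Prop :=
  forall x y, is_geodesic d x y (geo x y) /\
    (forall gamma, is_geodesic d x y gamma ->
       forall t, 0 <= t <= 1 -> gamma t = geo x y t).

Definition p_uniformly_convex (d : G -> G -> R) (geo : G -> G -> R -> G)
  (p c : R) : Prop :=
  forall x y z tau, 0 <= tau <= 1 ->
    d z (geo x y tau) `^ p <=
      (1 - tau) * d z x `^ p + tau * d z y `^ p
      - c / 2 * tau * (1 - tau) * d x y `^ p.

Definition mcvg (d : G -> G -> R) (u : nat -> G) (x : G) : Prop :=
  (fun n => d (u n) x) @ \oo --> (0 : R).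

(* boundedly compact: every bounded sequence has a convergent subsequence
   (equivalently, closed bounded sets are compact) *)
Definition boundedly_compact (d : G -> G -> R) : Prop :=
  forall u : nat -> G, (exists x0 M, forall n, d x0 (u n) <= M) ->
    exists (phi : nat -> nat) (x : G),
      (forall n, (phi n < phi n.+1)%N) /\ mcvg d (u \o phi) x.

Definition convex_fun (geo : G -> G -> R -> G) (f : G -> R) : Prop :=
  forall x y tau, 0 <= tau <= 1 ->
    f (geo x y tau) <= (1 - tau) * f x + tau * f y.

Definition lsc (d : G -> G -> R) (f : G -> R) : Prop :=
  forall (u : nat -> G) x, mcvg d u x ->
    forall e : R, 0 < e -> \forall n \near \oo, f x - e < f (u n).

Definition argmin (f : G -> R) : set G := [set x | forall y, f x <= f y].

Definition prox_obj (d : G -> G -> R) (f : G -> R) (p lambda : R) (x y : G) : R :=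
  f y + (p * lambda `^ (p - 1))^-1 * d y x `^ p.

Definition prox (d : G -> G -> R) (f : G -> R) (p lambda : R) (x : G) : G :=
  xget x (argmin (prox_obj d f p lambda x)).

Definition Delta (d : G -> G -> R) (p c : R) (x y u v : G) : R :=
  c / 4 * (d x v `^ p + d y u `^ p - d x u `^ p - d y v `^ p).

Definition psi (d : G -> G -> R) (p c : R) (x y u v : G) : R :=
  c / 2 * (d x u `^ p + d y v `^ p + d u v `^ p + d x y `^ p
           - d y u `^ p - d x v `^ p).

End Defs.

(* The proximal objective F_x y = f y + d(y,x)^p / (p lambda^(p-1)) is lower
   semicontinuous and coercive: a convex function is bounded below by an affine
   function of d(x,.), while d(x,.)^p grows superlinearly because p > 1.  On a
   boundedly compact space F_x therefore attains its minimum, and prox x is a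
   minimizer.  The p-uniform convexity of d(x,.)^p makes F_x uniformly convex
   along geodesics; letting the geodesic parameter tend to 0 at a minimizer u
   gives F_x u + K c/2 d(u,v)^p <= F_x v for every v, with K = 1/(p lambda^(p-1)).
   Adding this inequality at x (with v = prox y) and at y (with v = prox x)
   cancels f and leaves
     c d(x+,y+)^p <= d(x,y+)^p + d(y,x+)^p - d(x,x+)^p - d(y,y+)^p,
   from which (ii) and (iii) are algebra; (iii) holds in fact for every c > 1. *)

From mathcomp Require Import all_boot all_order all_algebra.
From mathcomp Require Import all_classical all_reals all_analysis.
From mathcomp Require Import ring lra.
Set Implicit Arguments. Unset Strict Implicit.
Import Order.TTheory GRing.Theory Num.Theory numFieldNormedType.Exports.
Local Open Scope classical_set_scope.
Local Open Scope ring_scope.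

Lemma incr_leq_infl (phi : nat -> nat) :
  (forall n, (phi n < phi n.+1)%N) -> forall n, (n <= phi n)%N.
Proof. by move=> phiS; elim=> // n IH; exact: leq_ltn_trans IH (phiS n). Qed.

Lemma ler_of_forall_addM (R : realFieldType) (a b q : R) :
  (forall t, 0 < t < 1 -> a <= b + t * q) -> a <= b.
Proof.
move=> H; have [q_le0|q_gt0] := leP q 0.
  have half_itv : 0 < (1 / 2 : R) < 1 by apply/andP; split; lra.
  by have := H _ half_itv; lra.
apply/ler_addgt0Pr => e e_gt0.
have qe_gt0 : 0 < q + e by lra.
have := H (e / (q + e)); rewrite divr_gt0 // ltr_pdivrMr // mul1r.
have : e / (q + e) * q <= e by rewrite mulrAC ler_pdivrMr //; nra.
lra.
Qed.

Section LowerSemicontinuity.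
Variables (R : realType) (G : choiceType) (d : G -> G -> R).

Lemma lscD (f g : G -> R) : lsc d f -> lsc d g -> lsc d (f \+ g).
Proof.
move=> lf lg u x ux e e_gt0; have e2_gt0 : 0 < e / 2 by lra.
by apply: filterS2 (lf _ _ ux _ e2_gt0) (lg _ _ ux _ e2_gt0) => n /=; lra.
Qed.

Lemma lscZ (k : R) (f : G -> R) : 0 < k -> lsc d f -> lsc d (fun y => k * f y).
Proof.
move=> k_gt0 lf u x ux e e_gt0.
apply: filterS (lf _ _ ux _ (divr_gt0 e_gt0 k_gt0)) => n.
by rewrite -(ltr_pM2l k_gt0) mulrBr mulrCA divff ?gt_eqF // mulr1.
Qed.

Lemma lsc_powR_dist (p : R) (x : G) :
  is_metric d -> 0 < p -> lsc d (fun y => d y x `^ p).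
Proof.
move=> [d_ge0 _ dC dtri] p_gt0 u z uz e e_gt0.
(* At z = x the function attains its minimum 0, which is all lower
   semicontinuity asks for; elsewhere powR is continuous. *)
have [zx0|zx_neq0] := eqVneq (d z x) 0.
  apply: nearW => n; rewrite zx0 powR0 ?gt_eqF //.
  by have := powR_ge0 (d (u n) x) p; lra.
have zx_gt0 : 0 < d z x by rewrite lt_neqAle eq_sym zx_neq0 d_ge0.
have dist_cvg : (fun n => d (u n) x) @ \oo --> d z x.
  apply/cvgrPdist_lt => r r_gt0; move/cvgrPdist_lt: uz => /(_ r r_gt0).
  apply: filterS => n; rewrite sub0r normrN ger0_norm // ltr_distlC => unz.
  have := dtri (u n) z x; have := dtri z (u n) x; rewrite (dC z (u n)); lra.
have powR_cont : {for d z x, continuous (fun s : R => s `^ p)}.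
  apply/differentiable_continuous/derivable1_diffP.
  by apply: derivable_powR; rewrite in_itv /= zx_gt0.
move/cvgrPdist_lt: (cvg_comp _ _ dist_cvg powR_cont) => /(_ e e_gt0).
by apply: filterS => n; rewrite ltr_distlC => /andP[].
Qed.

End LowerSemicontinuity.

Section Minimizers.
Variables (R : realType) (G : choiceType) (d : G -> G -> R).
Hypothesis bcompact : boundedly_compact d.

Lemma lsc_bounded_below_ball (F : G -> R) : lsc d F ->
  forall x r, exists m, forall y, d x y <= r -> m <= F y.
Proof.
move=> lF x r; apply: contrapT => unbounded.
have /choice[y Hy] : forall n : nat, exists y, d x y <= r /\ F y < - n%:R.
  move=> n; apply: contrapT => Hn; apply: unbounded.
  exists (- n%:R) => y xy; rewrite leNgt; apply/negP => Fy; apply: Hn; exists y.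
  by split.
have [|phi [z [phiS yz]]] := bcompact (u := y).
  by exists x, r => n; exact: (Hy n).1.
near \oo => n.
have lsc_n : F z - 1 < F (y (phi n)) by near: n; exact: lF _ _ yz _ ltr01.
have n_large : 1 - F z <= n%:R by near: n; exact: nbhs_infty_ger.
have n_le_phin : (n%:R : R) <= (phi n)%:R by rewrite ler_nat incr_leq_infl.
by have := (Hy (phi n)).2; lra.
Unshelve. all: end_near. Qed.

Lemma lsc_argmin_exists (F : G -> R) (x : G) (r : R) : lsc d F ->
  (forall y, F y <= F x -> d x y <= r) -> exists u, argmin F u.
Proof.
move=> lF sublevel.
have [m Hm] := lsc_bounded_below_ball lF x r.
have F_lb : forall y, Num.min m (F x) <= F y.
  move=> y; have [Fyx|Fxy] := leP (F y) (F x).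
    by rewrite ge_min Hm // sublevel.
  by rewrite ge_min (ltW Fxy) orbT.
have E_inf : has_inf (range F).
  by split; [exists (F x), x | exists (Num.min m (F x)) => _ [y _ <-]].
have inf_le y : inf (range F) <= F y by apply: ge_inf; [exact: E_inf.2 | exact: imageT].
have /choice[y Hy] : forall n : nat,
    exists y, F y <= F x /\ F y < inf (range F) + n.+1%:R^-1.
  move=> n; have n_pos : 0 < (n.+1%:R^-1 : R) by rewrite invr_gt0 ltr0Sn.
  have [_ [v _ <-] Fv] := inf_adherent n_pos E_inf.
  have [vx|xv] := leP (F v) (F x); first by exists v.
  by exists x; split=> //; exact: lt_trans xv Fv.
have [|phi [z [phiS yz]]] := bcompact (u := y).
  by exists x, r => n; apply: sublevel; exact: (Hy n).1.
exists z => w; apply: le_trans (inf_le w); apply/ler_addgt0Pr => e e_gt0.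
have e2_gt0 : 0 < e / 2 by lra.
near \oo => n.
have lsc_n : F z - e / 2 < F (y (phi n)) by near: n; exact: lF _ _ yz _ e2_gt0.
have n_large : n.+1%:R^-1 < e / 2.
  by near: n; exact: (near_infty_natSinv_lt (PosNum e2_gt0)).
have inv_le : (phi n).+1%:R^-1 <= n.+1%:R^-1 :> R.
  by rewrite lef_pV2 ?posrE ?ltr0Sn // ler_nat ltnS incr_leq_infl.
(* lra does not treat the inverses n.+1%:R^-1 as atoms. *)
move: (Hy (phi n)).2 inv_le n_large.
move: ((phi n).+1%:R^-1) (n.+1%:R^-1) => a b; lra.
Unshelve. all: end_near. Qed.

End Minimizers.

Lemma powR_dominates_affine (R : realType) (b k p : R) :
  0 <= b -> 0 < k -> 1 < p ->
  exists r, forall t, r < t -> b * (1 + t) < k * t `^ p.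
Proof.
move=> b_ge0 k_gt0 p_gt1; set s := 2 * b / k.
have s_ge0 : 0 <= s by apply: divr_ge0; [lra | exact: ltW].
have p1_gt0 : 0 < p - 1 by lra.
exists (Num.max 1 (s `^ (p - 1)^-1)) => t; rewrite gt_max => /andP[t_gt1 ts].
have s_lt : s < t `^ (p - 1).
  have -> : s = (s `^ (p - 1)^-1) `^ (p - 1).
    by rewrite -powRrM mulVf ?gt_eqF // powRr1.
  by apply: gt0_ltr_powR; rewrite ?nnegrE ?powR_ge0 //; lra.
have ks : k * s = 2 * b by rewrite mulrC divfK ?gt_eqF.
rewrite -mulr_powRB1 ?(lt_trans ltr01) //; last lra.
have : k * t * s < k * t * t `^ (p - 1) by rewrite ltr_pM2l // mulr_gt0 //; lra.
nra.
Qed.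

Section Geodesics.
Variables (R : realType) (G : choiceType) (d : G -> G -> R) (geo : G -> G -> R -> G).

Lemma geo_dist_left x y s :
  uniquely_geodesic d geo -> 0 <= s <= 1 -> d x (geo x y s) = s * d x y.
Proof.
move=> ug s01; have [[geo0 _ geo_d] _] := ug x y.
have := geo_d 0 s; rewrite geo0 => ->; rewrite ?lexx ?ler01 //.
by rewrite sub0r normrN ger0_norm //; case/andP: s01.
Qed.

Lemma argmin_growth (F : G -> R) (u v : G) (kappa : R) :
  (forall t, 0 < t < 1 -> F (geo u v t) <= (1 - t) * F u + t * F v - kappa * t * (1 - t)) ->
  argmin F u -> F u + kappa <= F v.
Proof.
move=> Fconv Fu; rewrite -lerBrDr; apply: (@ler_of_forall_addM _ _ _ kappa).
move=> t /[dup] t01 /andP[t_gt0 _].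
have : t * F u <= t * (F v - kappa + t * kappa).
  by have := le_trans (Fu (geo u v t)) (Fconv t t01); nra.
by rewrite ler_pM2l.
Qed.

Lemma convex_affine_minorant (f : G -> R) (x : G) (m : R) :
  is_metric d -> uniquely_geodesic d geo -> convex_fun geo f ->
  (forall y, d x y <= 1 -> m <= f y) ->
  exists b, 0 <= b /\ forall y, f x - b * (1 + d x y) <= f y.
Proof.
move=> [d_ge0 d_eq0 _ _] ug fconv f_ball.
have m_le : m <= f x by apply: f_ball; rewrite (proj2 (d_eq0 x x)) ?ler01.
exists (f x - m); split=> [|y]; first lra.
have dxy_ge0 := d_ge0 x y.
have [xy_le1|xy_gt1] := leP (d x y) 1; first by have := f_ball y xy_le1; nra.
set r := d x y in dxy_ge0 xy_gt1 *.
have r_gt0 : 0 < r by lra.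
have rV01 : 0 <= r^-1 <= 1 by rewrite invr_ge0 ltW //= invf_le1 // ltW.
have f_mid : m <= (1 - r^-1) * f x + r^-1 * f y.
  apply: le_trans (fconv x y _ rV01); apply: f_ball.
  by rewrite geo_dist_left // mulVf ?gt_eqF.
have : r * m <= r * ((1 - r^-1) * f x + r^-1 * f y) by rewrite ler_pM2l.
rewrite mulrDr mulrA mulrBr mulr1 mulfV ?gt_eqF // mulrA mulfV ?gt_eqF // mul1r.
nra.
Qed.

End Geodesics.

(* Delta d p c x y u v = c/4 * four_point_excess d p x y u v, and
   psi d p c x y u v = c/2 * (d x y^p + d u v^p - four_point_excess d p x y u v). *)
Definition four_point_excess (R : realType) (G : choiceType) (d : G -> G -> R)
  (p : R) (x y u v : G) : R :=
  d x v `^ p + d y u `^ p - d x u `^ p - d y v `^ p.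

Definition prox_weight (R : realType) (p lambda : R) : R := (p * lambda `^ (p - 1))^-1.

Section Prox.
Variables (R : realType) (G : choiceType) (d : G -> G -> R) (geo : G -> G -> R -> G).
Variables (p c lambda : R) (f : G -> R).
Hypotheses (dmetric : is_metric d) (p_gt1 : 1 < p) (lambda_gt0 : 0 < lambda).
Hypotheses (ug : uniquely_geodesic d geo) (bcompact : boundedly_compact d).
Hypotheses (uconv : p_uniformly_convex d geo p c).
Hypotheses (fconv : convex_fun geo f) (lf : lsc d f).

Let p_gt0 : 0 < p := lt_trans ltr01 p_gt1.

Local Notation K := (prox_weight p lambda).
Local Notation F := (prox_obj d f p lambda).

Let K_gt0 : 0 < K.
Proof. by rewrite invr_gt0 mulr_gt0 ?powR_gt0. Qed.

Let prox_objE x y : F x y = f y + K * d x y `^ p.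
Proof. by case: dmetric => _ _ dC _; rewrite /prox_obj dC. Qed.

Lemma prox_obj_id x : F x x = f x.
Proof.
case: dmetric => _ d_eq0 _ _.
by rewrite prox_objE (proj2 (d_eq0 x x)) // powR0 ?mulr0 ?addr0 // gt_eqF.
Qed.

Lemma lsc_prox_obj x : lsc d (F x).
Proof. by apply: lscD lf _; apply: lscZ K_gt0 _; exact: lsc_powR_dist. Qed.

Lemma prox_obj_sublevel_bounded x : exists r, forall y, F x y <= F x x -> d x y <= r.
Proof.
have [m f_ball] := lsc_bounded_below_ball bcompact lf x 1.
have [b [b_ge0 f_minor]] := convex_affine_minorant dmetric ug fconv f_ball.
have [r growth] := powR_dominates_affine b_ge0 K_gt0 p_gt1.
exists r => y; rewrite prox_obj_id prox_objE => Fy; rewrite leNgt.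
by apply/negP => /growth; have := f_minor y; lra.
Qed.

Lemma prox_argmin x : argmin (F x) (prox d f p lambda x).
Proof.
apply: xgetPex; have [r sublevel] := prox_obj_sublevel_bounded x.
exact: (lsc_argmin_exists bcompact (lsc_prox_obj x) sublevel).
Qed.

Lemma prox_obj_uniformly_convex x u v t : 0 <= t <= 1 ->
  F x (geo u v t) <=
    (1 - t) * F x u + t * F x v - K * (c / 2) * t * (1 - t) * d u v `^ p.
Proof.
move=> t01; rewrite !prox_objE.
have := uconv u v x t01; rewrite -(ler_pM2l K_gt0).
by have := fconv u v t01; lra.
Qed.

Lemma argmin_prox_obj_growth x u v :
  argmin (F x) u -> F x u + K * (c / 2) * d u v `^ p <= F x v.
Proof.
move=> Fu; apply: argmin_growth Fu => t /andP[t_gt0 t_lt1].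
have -> : K * (c / 2) * d u v `^ p * t * (1 - t) =
          K * (c / 2) * t * (1 - t) * d u v `^ p by ring.
by apply: prox_obj_uniformly_convex; rewrite !ltW.
Qed.

Lemma argmin_prox_obj_four_point x y u v :
  argmin (F x) u -> argmin (F y) v -> c * d u v `^ p <= four_point_excess d p x y u v.
Proof.
have [_ _ dC _] := dmetric => Fu Fv.
have := argmin_prox_obj_growth v Fu; have := argmin_prox_obj_growth u Fv.
rewrite !prox_objE (dC v u) => Fv_le Fu_le.
rewrite -(ler_pM2l K_gt0) /four_point_excess; lra.
Qed.

Lemma argmin_prox_obj_fix x u : argmin f x -> argmin (F x) u -> u = x.
Proof.
have [_ d_eq0 dC _] := dmetric => fx Fu.
have := Fu x; rewrite prox_obj_id prox_objE; have := fx u.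
have := powR_ge0 (d x u) p => dp_ge0 fxu Fxu.
apply/d_eq0; rewrite dC; apply: (@powR_eq0_eq0 _ _ p).
by apply/eqP; rewrite eq_le dp_ge0 andbT -(pmulr_rle0 _ K_gt0); lra.
Qed.

End Prox.

Section FourPointExcess.
Variables (R : realType) (G : choiceType) (d : G -> G -> R) (p c : R) (x y u v : G).
Hypothesis excess_ge : c * d u v `^ p <= four_point_excess d p x y u v.

Lemma Delta_ge_of_four_point_excess :
  0 < c -> c ^+ 2 / 4 * d u v `^ p <= Delta d p c x y u v.
Proof.
move=> c_gt0; rewrite /Delta -/(four_point_excess d p x y u v).
have -> : c ^+ 2 / 4 * d u v `^ p = c / 4 * (c * d u v `^ p) by ring.
by rewrite ler_pM2l ?divr_gt0.
Qed.

Lemma afne_of_four_point_excess : 1 < c ->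
  d u v `^ p <= (1 + (2 - c) / (c - 1)) * d x y `^ p
    - (1 - c * (c - 1) / (2 + c * (c - 1))) / (c * (c - 1) / (2 + c * (c - 1)))
      * psi d p c x y u v.
Proof.
move=> c_gt1; move: excess_ge; rewrite /psi /four_point_excess => excess.
have c1_gt0 : 0 < c - 1 by lra.
have c_neq0 : c != 0 by rewrite gt_eqF //; lra.
have c2_neq0 : 2 + c * (c - 1) != 0 by rewrite gt_eqF //; nra.
set S := d x v `^ p + d y u `^ p - d x u `^ p - d y v `^ p in excess.
rewrite [X in _ <= X](_ : _ = (S - d u v `^ p) / (c - 1)); last first.
  by rewrite /S; field; rewrite c_neq0 c2_neq0 gt_eqF.
by rewrite ler_pdivlMr //; lra.
Qed.

End FourPointExcess.

Theorem mainTheorem11 (R : realType) (G : choiceType) (d : G -> G -> R)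
  (geo : G -> G -> R -> G) (p c lambda : R) (f : G -> R) :
  is_metric d -> uniquely_geodesic d geo -> boundedly_compact d ->
  1 < p -> 0 < c -> p_uniformly_convex d geo p c ->
  convex_fun geo f -> lsc d f -> 0 < lambda ->
  [/\ (forall x, argmin f x -> prox d f p lambda x = x),
      (forall x y, Delta d p c x y (prox d f p lambda x) (prox d f p lambda y)
                   >= c ^+ 2 / 4 * d (prox d f p lambda x) (prox d f p lambda y) `^ p) &
      (3 / 2 < c <= 2 ->
         forall x y,
           d (prox d f p lambda x) (prox d f p lambda y) `^ p <=
             (1 + (2 - c) / (c - 1)) * d x y `^ p
             - (1 - c * (c - 1) / (2 + c * (c - 1))) / (c * (c - 1) / (2 + c * (c - 1)))
               * psi d p c x y (prox d f p lambda x) (prox d f p lambda y))].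
Proof.
move=> dmetric ug bcompact p_gt1 c_gt0 uconv fconv lf lambda_gt0.
have prox_min x := prox_argmin dmetric p_gt1 lambda_gt0 ug bcompact fconv lf x.
have excess x y := argmin_prox_obj_four_point dmetric p_gt1 lambda_gt0 uconv fconv
  (prox_min x) (prox_min y).
split=> [x fx | x y | /andP[c_gt32 _] x y].
- exact: (argmin_prox_obj_fix dmetric p_gt1 lambda_gt0 fx (prox_min x)).
- exact: (Delta_ge_of_four_point_excess (excess x y) c_gt0).
- by apply: (afne_of_four_point_excess (excess x y)); lra.
Qed.
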